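(* Let $n\ge 1$ and let $B=(b_{st})$ be an $n\times n$ symmetric matrix over the complex numbers. For $1\le i,j\le n$ let $B_{[ij]}=(b^{ij}_{st})$ be the $n\times n$ matrix with $b^{ij}_{st}=b_{st}$ if $(s,t)\ne(i,j)$ and $(s,t)\ne(j,i)$, and $b^{ij}_{st}=0$ otherwise. For $i<j$ let $B^{i,j}_{i,j}$ denote the $(n-2)\times(n-2)$ submatrix of $B$ obtained by deleting rows $i,j$ and columns $i,j$. Then $$\frac{1}{2}(n^2-n)\,d_2(B)=\sum_{1\le i\le j\le n} d_2(B_{[ij]})+\sum_{1\le i<j\le n} b_{ij}^2\, d_2(B^{i,j}_{i,j}).$$
   Context: For an $n\times n$ matrix $M=(m_{ij})$ ($n\ge 2$), the second immanant is $d_2(M)=\sum_{\sigma\in S_n}\chi_2(\sigma)\prod_{s=1}^n m_{s\sigma(s)}$, where $\chi_2$ is the irreducible character of the symmetric group $S_n$ corresponding to the partition $(2,1^{n-2})$. It satisfies $d_2(X)=\sum_{i=1}^k x_{ii}\det(X(i))-\det(X)$ for a $k\times k$ matrix $X$, where $X(i)$ is $X$ with row and column $i$ deleted; for matrices of order less than $2$, $d_2$ is understood via this identity, with the determinant of the empty ($0\times 0$) matrix equal to $1$. *)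

From HB Require Import structures.
From mathcomp Require Import all_boot all_order all_algebra all_fingroup.
From mathcomp Require Import zify.
Set Implicit Arguments. Unset Strict Implicit. Unset Printing Implicit Defensive.
Import Order.TTheory GRing.Theory Num.Theory.
Local Open Scope ring_scope.

(* chi_2(sigma) for the partition (2,1^{m-2}): sgn(sigma) * (#fixed points - 1). *)
Definition chi2 (m : nat) (s : 'S_m) (R : nzRingType) : R :=
  (-1) ^+ s * ((#|[set x | s x == x]|)%:R - 1).

(* The second immanant d_2. For m < 2 it agrees with the convention
   d_2(X) = sum_i x_ii det X(i) - det X (d_2 = -1 for m = 0, 0 for m = 1). *)
Definition d2 (R : comNzRingType) (m : nat) (A : 'M[R]_m) : R :=
  \sum_(s : 'S_m) chi2 s R * \prod_(k : 'I_m) A k (s k).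

Definition zero_pair (R : nzRingType) (n : nat) (B : 'M[R]_n) (i j : 'I_n) : 'M[R]_n :=
  \matrix_(s, t) if ((s == i) && (t == j)) || ((s == j) && (t == i)) then 0 else B s t.

Lemma del2_idx_proof (n : nat) (i j : 'I_n) (k : 'I_(n.-2)) :
  (bump j (bump i k) < n)%N.
Proof.
case: k => k /= hk; rewrite /bump.
case: (i <= k)%N; case: (j <= _)%N; rewrite /= ?add0n ?add1n;
  case: n i j hk => [|[|n]] //= *; lia.
Qed.

(* For i < j : the k-th (0-based) index of {0..n-1} \ {i,j}, in increasing order. *)
Definition del2_idx (n : nat) (i j : 'I_n) (k : 'I_(n.-2)) : 'I_n :=
  Ordinal (del2_idx_proof i j k).

(* B^{i,j}_{i,j}: delete rows i, j and columns i, j (meaningful for i < j). *)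
Definition del2 (R : nzRingType) (n : nat) (B : 'M[R]_n) (i j : 'I_n) : 'M[R]_(n.-2) :=
  mxsub (del2_idx i j) (del2_idx i j) B.

From HB Require Import structures.
From mathcomp Require Import all_boot all_order all_algebra all_fingroup.
From mathcomp Require Import zify.
Import Order.TTheory GRing.Theory Num.Theory.

(* Write G(s) = chi2(s) * prod_k b_(k, s k) for s in S_n, so that every d2 in the
   identity is a sum of such terms.  d2(B_[ij]) is the sum of G(s) over the s whose
   graph avoids (i, j) and (j, i).  For i < j, b_ij^2 d2(B^{ij}_{ij}) is minus the sum
   of G(s) over the s containing the 2-cycle (i j): deleting that 2-cycle flips the
   sign and keeps the fixed points, and b_ij b_ji = b_ij^2 by symmetry.  Hence the
   right-hand side is sum_s G(s) (N1(s) - N2(s)), where N1(s) counts the pairs i <= j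
   avoided by s and N2(s) its 2-cycles, and inclusion-exclusion gives
   N1(s) - N2(s) = C(n, 2) for every map s. *)

Set Implicit Arguments.
Unset Strict Implicit.
Unset Printing Implicit Defensive.

Section OrderedPairs.
Variables (R : Type) (idx : R) (op : Monoid.com_law idx) (n : nat).
Implicit Type F : 'I_n -> 'I_n -> R.

Lemma big_leq_pairs F :
  \big[op/idx]_(i < n) \big[op/idx]_(j < n | i <= j) F i j =
  op (\big[op/idx]_(i < n) F i i) (\big[op/idx]_(i < n) \big[op/idx]_(j < n | i < j) F i j).
Proof.
rewrite -big_split; apply: eq_bigr => i _ /=.
rewrite (bigD1 i) ?leqnn //=; congr (op _ _); apply: eq_bigl => j.
by rewrite ltn_neqAle eq_sym andbC.
Qed.

Lemma big_ltn_pairs_sym F :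
  \big[op/idx]_(i < n) \big[op/idx]_(j < n | i < j) op (F i j) (F j i) =
  \big[op/idx]_(i < n) \big[op/idx]_(j < n | i != j) F i j.
Proof.
under eq_bigr do rewrite big_split /=.
rewrite big_split /= [X in op _ X](exchange_big_dep xpredT) //= -big_split /=.
apply: eq_bigr => i _; rewrite [RHS](bigID (fun j : 'I_n => i < j)) /=.
congr (op _ _); apply: eq_bigl => j.
  by rewrite andb_idl // ltn_neqAle => /andP[].
by rewrite -leqNgt eq_sym ltn_neqAle.
Qed.

End OrderedPairs.

Lemma card_ltn_pairs n : \sum_(i < n) \sum_(j < n | i < j) 1 = 'C(n, 2).
Proof.
apply/eqP; rewrite -(eqn_pmul2l (isT : 0 < 2)) -[2 * 'C(n, 2)]mul_bin_diag bin1.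
rewrite mul2n -addnn -big_split /=.
under eq_bigr do rewrite -big_split /=.
rewrite (big_ltn_pairs_sym _ (fun _ _ => 1)) /=.
have card_neq (i : 'I_n) : \sum_(j < n | i != j) 1 = n.-1.
  by rewrite (eq_bigl (predC1 i)) => [|j]; rewrite ?sum1_card ?cardC1 ?card_ord // eq_sym.
under eq_bigr do rewrite card_neq.
by rewrite sum_nat_const card_ord.
Qed.

Lemma sum_neq_eq (T : finType) (x y : T) : \sum_(j | x != j) (y == j) = (y != x).
Proof.
have [-> | neq_yx] := eqVneq y x.
  by rewrite big1 // => j /negbTE->.
rewrite (bigD1 y) 1?eq_sym // eqxx big1 ?addn0 // => j /andP[_].
by rewrite eq_sym => /negbTE->.
Qed.

Lemma sum_pairs_avoiding_graph n (f : 'I_n -> 'I_n) :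
  \sum_(i < n) \sum_(j < n | i <= j) ~~ ((f i == j) || (f j == i)) =
  'C(n, 2) + \sum_(i < n) \sum_(j < n | i < j) ((f i == j) && (f j == i)).
Proof.
have count_bool (a b : bool) : ~~ (a || b) + (a + b) = 1 + (a && b).
  by case: a; case: b.
have graph_off_diag :
    \sum_(i < n) \sum_(j < n | i < j) ((f i == j) + (f j == i)) = \sum_(i < n) (f i != i).
  by rewrite big_ltn_pairs_sym /=; apply: eq_bigr => i _; apply: sum_neq_eq.
have pairwise :
    \sum_(i < n) \sum_(j < n | i < j) ~~ ((f i == j) || (f j == i))
    + \sum_(i < n) \sum_(j < n | i < j) ((f i == j) + (f j == i))
  = \sum_(i < n) \sum_(j < n | i < j) 1
    + \sum_(i < n) \sum_(j < n | i < j) ((f i == j) && (f j == i)).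
  rewrite -!big_split; apply: eq_bigr => i _.
  by rewrite -!big_split; apply: eq_bigr => j _; apply: count_bool.
rewrite big_leq_pairs /= -card_ltn_pairs; under eq_bigr do rewrite orbb.
by rewrite addnC -graph_off_diag.
Qed.

Local Open Scope ring_scope.

Definition d2_term (R : comNzRingType) n (A : 'M[R]_n) (s : 'S_n) : R :=
  chi2 s R * \prod_k A k (s k).

Lemma big_lift_perm (R : nmodType) n (i j : 'I_n.+1) (F : 'S_n.+1 -> R) :
  \sum_(s : 'S_n.+1 | s i == j) F s = \sum_(s : 'S_n) F (lift_perm i j s).
Proof.
rewrite (reindex (lift_perm i j)) /=; last first.
  pose ulsf (i0 : 'I_n.+1) (s : 'S_n.+1) k := odflt k (unlift (s i0) (s (lift i0 k))).
  have ulsfK i0 (s : 'S_n.+1) k : lift (s i0) (ulsf i0 s k) = s (lift i0 k).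
    rewrite /ulsf; have:= neq_lift i0 k.
    by rewrite -(can_eq (permK s)) => /unlift_some[] ? ? ->.
  have inj_ulsf : injective (ulsf i _).
    move=> s; apply: can_inj (ulsf (s i) s^-1%g) _ => k'.
    by rewrite {1}/ulsf ulsfK !permK liftK.
  exists (fun s => perm (inj_ulsf s)) => [s _ | s].
    by apply/permP=> k'; rewrite permE /ulsf lift_perm_lift lift_perm_id liftK.
  move/(s _ =P _) => si0; apply/permP=> k.
  case: (unliftP i k) => [k'|] ->; rewrite ?lift_perm_id //.
  by rewrite lift_perm_lift -si0 permE ulsfK.
by apply: eq_big => [s | s _] //; rewrite lift_perm_id eqxx.
Qed.

Section DeleteTwo.
Variables (m : nat) (i j : 'I_m.+2).
Hypothesis lt_ij : (i < j)%N.

Let i' : 'I_m.+1 := inord i.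
Let j' : 'I_m.+1 := inord j.-1.

Let i'E : i' = i :> nat.
Proof. by rewrite inordK // (leq_trans lt_ij) // -ltnS. Qed.

Let j'E : j' = j.-1 :> nat.
Proof. by rewrite inordK // -ltnS prednK ?(leq_ltn_trans _ lt_ij). Qed.

Lemma lift_i_j' : lift i j' = j.
Proof. apply: val_inj; rewrite /= /bump j'E; lia. Qed.

Lemma lift_j_i' : lift j i' = i.
Proof. apply: val_inj; rewrite /= /bump i'E; lia. Qed.

Lemma del2_idx_lift_j k : del2_idx i j k = lift j (lift i' k).
Proof. by apply: val_inj; rewrite /= /bump i'E. Qed.

Lemma del2_idx_lift_i k : del2_idx i j k = lift i (lift j' k).
Proof. apply: val_inj; rewrite /= /bump j'E; lia. Qed.

Definition swap_lift (t : 'S_m) : 'S_m.+2 := lift_perm i j (lift_perm j' i' t).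

Lemma swap_lift_i t : swap_lift t i = j.
Proof. exact: lift_perm_id. Qed.

Lemma swap_lift_j t : swap_lift t j = i.
Proof. by rewrite -[in LHS]lift_i_j' lift_perm_lift lift_perm_id lift_j_i'. Qed.

Lemma swap_lift_del2_idx t k : swap_lift t (del2_idx i j k) = del2_idx i j (t k).
Proof. by rewrite del2_idx_lift_i del2_idx_lift_j !lift_perm_lift. Qed.

Lemma odd_swap_lift t : swap_lift t = ~~ t :> bool.
Proof.
rewrite !odd_lift_perm i'E j'E.
by case: (nat_of_ord j) lt_ij => // k _ /=; case: (odd i); case: (odd k); case: odd_perm.
Qed.

Lemma sum_swap_perm (R : nmodType) (F : 'S_m.+2 -> R) :
  \sum_(s : 'S_m.+2 | (s i == j) && (s j == i)) F s = \sum_(t : 'S_m) F (swap_lift t).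
Proof.
rewrite big_mkcondr /= big_lift_perm -big_mkcond /=.
rewrite (eq_bigl (fun t : 'S_m.+1 => t j' == i')) ?big_lift_perm // => t.
have := lift_perm_lift i j t j'; rewrite lift_i_j' => ->.
by rewrite -[X in _ == X]lift_j_i' (inj_eq lift_inj).
Qed.

Lemma big_del2_idx (R : Type) (idx : R) (op : SemiGroup.com_law R) (F : 'I_m.+2 -> R) :
  \big[op/idx]_k F k = op (F i) (op (F j) (\big[op/idx]_k F (del2_idx i j k))).
Proof.
rewrite (bigD1_ord i) // (bigD1_ord j') // lift_i_j'.
by congr (op _ (op _ _)); apply: eq_bigr => k _; rewrite del2_idx_lift_i.
Qed.

Lemma del2_idx_inj : injective (del2_idx i j).
Proof. by move=> k l; rewrite !del2_idx_lift_i => /lift_inj/lift_inj. Qed.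

Lemma card_fix_swap_lift t :
  #|[set x | swap_lift t x == x]| = #|[set k | t k == k]|.
Proof.
have neq_ij : i != j by rewrite neq_ltn lt_ij.
rewrite -!sum1dep_card [LHS]big_mkcond big_del2_idx /= swap_lift_i swap_lift_j.
rewrite eq_sym (negbTE neq_ij) [RHS]big_mkcond; apply: eq_bigr => k _.
by rewrite swap_lift_del2_idx (inj_eq del2_idx_inj).
Qed.

Lemma d2_term_swap_lift (R : comNzRingType) (B : 'M[R]_m.+2) t :
  d2_term B (swap_lift t) = - (B i j * B j i * d2_term (del2 B i j) t).
Proof.
have prodE : \prod_k B k (swap_lift t k) = B i j * B j i * \prod_k del2 B i j k (t k).
  rewrite big_del2_idx /= swap_lift_i swap_lift_j mulrA; congr (_ * _).
  by apply: eq_bigr => k _; rewrite swap_lift_del2_idx mxE.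
by rewrite /d2_term /chi2 odd_swap_lift signrN card_fix_swap_lift prodE !mulNr mulrCA.
Qed.

Lemma sum_swap_d2_term (R : comNzRingType) (B : 'M[R]_m.+2) :
  \sum_(s : 'S_m.+2 | (s i == j) && (s j == i)) d2_term B s =
  - (B i j * B j i * d2 (del2 B i j)).
Proof.
by rewrite sum_swap_perm /d2 mulr_sumr -sumrN; apply: eq_bigr => t _; rewrite d2_term_swap_lift.
Qed.

End DeleteTwo.

Lemma d2_zero_pair (R : comNzRingType) n (B : 'M[R]_n) (i j : 'I_n) :
  d2 (zero_pair B i j) = \sum_(s : 'S_n | ~~ ((s i == j) || (s j == i))) d2_term B s.
Proof.
rewrite /d2 [RHS]big_mkcond; apply: eq_bigr => s _ /=; rewrite /d2_term.
case: ifP => [avoid | /negbFE/orP[] /eqP hit].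
- congr (_ * _); apply: eq_bigr => k _; rewrite mxE.
  by case: ifP => // /orP[] /andP[/eqP-> /eqP hit]; rewrite hit eqxx ?orbT in avoid.
- by rewrite (bigD1 i) //= mxE hit !eqxx /= mul0r mulr0.
- by rewrite (bigD1 j) //= mxE hit !eqxx orbT /= mul0r mulr0.
Qed.

Lemma sum_pairs_exchange (R : nmodType) (T : finType) n (A : 'I_n -> 'I_n -> bool)
    (P : 'I_n -> 'I_n -> pred T) (F : T -> R) :
  \sum_(i < n) \sum_(j < n | A i j) \sum_(x | P i j x) F x =
  \sum_x F x *+ (\sum_(i < n) \sum_(j < n | A i j) P i j x).
Proof.
under eq_bigr do under eq_bigr do rewrite big_mkcond; under eq_bigr do rewrite exchange_big.
rewrite exchange_big; apply: eq_bigr => x _.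
rewrite -sumrMnr; apply: eq_bigr => i _; rewrite -sumrMnr; apply: eq_bigr => j _.
by rewrite mulrb.
Qed.

Theorem d2_pair_expansion (R : comNzRingType) n (B : 'M[R]_n) : B^T = B ->
  'C(n, 2)%:R * d2 B =
    \sum_(i < n) \sum_(j < n | (i <= j)%N) d2 (zero_pair B i j)
  + \sum_(i < n) \sum_(j < n | (i < j)%N) B i j ^+ 2 * d2 (del2 B i j).
Proof.
move=> symB.
have swap_terms (i j : 'I_n) : (i < j)%N ->
    B i j ^+ 2 * d2 (del2 B i j) =
    - \sum_(s : 'S_n | (s i == j) && (s j == i)) d2_term B s.
  case: n B symB i j => [|[|m]] B symB i j lt_ij; try by have := ltn_ord j; lia.
  have symBij : B j i = B i j by rewrite -[in LHS]symB mxE.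
  by rewrite sum_swap_d2_term // opprK expr2 symBij.
under eq_bigr do under eq_bigr do rewrite d2_zero_pair.
under [X in _ + X]eq_bigr => i _ do under eq_bigr => j lt_ij do rewrite swap_terms //.
under [X in _ + X]eq_bigr do rewrite sumrN.
rewrite sumrN !sum_pairs_exchange /d2 mulr_sumr -sumrB; apply: eq_bigr => s _.
by rewrite sum_pairs_avoiding_graph mulrnDr addrK mulr_natl.
Qed.

Theorem lemma2p3 (C : numClosedFieldType) (n : nat) (B : 'M[C]_n) :
  (1 <= n)%N -> B^T = B ->
  2^-1 * ((n ^ 2)%:R - n%:R) * d2 B =
    \sum_(i < n) \sum_(j < n | (i <= j)%N) d2 (zero_pair B i j)
  + \sum_(i < n) \sum_(j < n | (i < j)%N) B i j ^+ 2 * d2 (del2 B i j).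
Proof.
move=> n_gt0 symB; rewrite -d2_pair_expansion //; congr (_ * _).
have twice_bin2 : (2 * 'C(n, 2) = n ^ 2 - n)%N.
  by rewrite -mul_bin_diag bin1 -subn1 mulnBr muln1.
by rewrite -natrB ?leq_pmulr // -twice_bin2 natrM mulKf ?pnatr_eq0.
Qed.
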